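(* Let $P$ be a pattern and $M$ a $P$-avoiding matrix. Let $z$ be a horizontal 0-run of $M$ and $f\in z$ a 0-entry of this run. Assume there is an embedding $\phi$ of $P$ into $M\Delta f$. Then $P$ has a 1-entry $e$ with $\phi(e)=f$, and moreover every entry of $P$ in the same column as $e$ is mapped by $\phi$ to a column of $M$ that contains an entry of $z$.
   Context: All matrices are binary; rows numbered top to bottom, columns left to right; $(i,j)$ is the entry in row $i$, column $j$; $[k]=\{1,\dots,k\}$. $M\Delta f$ denotes the matrix obtained from $M$ by switching the value of entry $f$. A horizontal 0-run is a maximal set of consecutive 0-entries within one row. An embedding of $P\in\{0,1\}^{k\times\ell}$ into $M\in\{0,1\}^{m\times n}$ is a map $\phi:[k]\times[\ell]\to[m]\times[n]$ sending 1-entries of $P$ to 1-entries of $M$ such that if $e_1=(i_1,j_1)$, $e_2=(i_2,j_2)$ with $\phi(e_1)=(i_1^*,j_1^* )$, $\phi(e_2)=(i_2^*,j_2^* )$, then $i_1<i_2$ implies $i_1^*<i_2^*$ and $j_1<j_2$ implies $j_1^*<j_2^*$. $M$ is $P$-avoiding if there is no embedding of $P$ into $M$ (equivalently, $P$ is not an interval minor of $M$). *)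

(* Binary matrices are 'M[bool]_(m,n); indices are 0-based
   ordinals ('I_m for rows, 'I_n for columns); entry (i,j) is a pair. *)
From mathcomp Require Import all_boot all_algebra.
Set Implicit Arguments. Unset Strict Implicit. Unset Printing Implicit Defensive.

Definition embedding (k l m n : nat) (P : 'M[bool]_(k, l)) (M : 'M[bool]_(m, n))
    (phi : 'I_k * 'I_l -> 'I_m * 'I_n) : Prop :=
  (forall e : 'I_k * 'I_l, P e.1 e.2 -> M (phi e).1 (phi e).2) /\
  (forall e1 e2 : 'I_k * 'I_l, e1.1 < e2.1 -> (phi e1).1 < (phi e2).1) /\
  (forall e1 e2 : 'I_k * 'I_l, e1.2 < e2.2 -> (phi e1).2 < (phi e2).2).

Definition avoids (k l m n : nat) (P : 'M[bool]_(k, l)) (M : 'M[bool]_(m, n)) : Prop :=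
  ~ exists phi, embedding P M phi.

Definition switch (m n : nat) (M : 'M[bool]_(m, n)) (f : 'I_m * 'I_n) : 'M[bool]_(m, n) :=
  \matrix_(i, j) (if (i, j) == f then ~~ M i j else M i j).

(* z is a horizontal 0-run of M: a maximal set of consecutive 0-entries in one row *)
Definition hzero_run (m n : nat) (M : 'M[bool]_(m, n)) (z : {set 'I_m * 'I_n}) : Prop :=
  exists (r : 'I_m) (a b : nat),
    a <= b /\
    (forall x : 'I_m * 'I_n, x \in z <-> (x.1 = r /\ a <= x.2 <= b)) /\
    (forall j : 'I_n, a <= j <= b -> M r j = false) /\
    (a = 0 \/ exists j : 'I_n, j.+1 = a /\ M r j = true) /\
    (b.+1 = n \/ exists j : 'I_n, (j : nat) = b.+1 /\ M r j = true).

(* If no 1-entry of P were sent to f, phi would already embed P into M, so some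
   1-entry e lands on f.  Let y be a 1-entry of M in the row of f that bounds the
   run z.  Were some entry of the column of e mapped beyond y, then every column
   of P left of e's column would map left of y and every column to its right would
   map right of y (or conversely), so moving the image of e from f to y would give
   an embedding of P into M itself.  Hence the whole column of e maps into the
   column range of z. *)
From mathcomp Require Import all_boot all_algebra.
From mathcomp Require Import zify.

Set Implicit Arguments.
Unset Strict Implicit.
Unset Printing Implicit Defensive.

Lemma embedding_inj (k l m n : nat) (P : 'M[bool]_(k, l)) (M : 'M[bool]_(m, n))
    (phi : 'I_k * 'I_l -> 'I_m * 'I_n) :
  embedding P M phi -> injective phi.
Proof.
case=> _ [row_mono col_mono] [i1 j1] [i2 j2] phiE.
have [lt_i|lt_i|/val_inj eq_i] := ltngtP i1 i2.
- by have := row_mono (i1, j1) (i2, j2) lt_i; rewrite phiE ltnn.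
- by have := row_mono (i2, j2) (i1, j1) lt_i; rewrite phiE ltnn.
have [lt_j|lt_j|/val_inj eq_j] := ltngtP j1 j2.
- by have := col_mono (i1, j1) (i2, j2) lt_j; rewrite phiE ltnn.
- by have := col_mono (i2, j2) (i1, j1) lt_j; rewrite phiE ltnn.
by rewrite eq_i eq_j.
Qed.

Lemma switch_neq (m n : nat) (M : 'M[bool]_(m, n)) (f x : 'I_m * 'I_n) :
  x != f -> switch M f x.1 x.2 = M x.1 x.2.
Proof. by rewrite /switch mxE -surjective_pairing => /negbTE ->. Qed.

Section SwitchedEmbedding.

Variables (k l m n : nat) (P : 'M[bool]_(k, l)) (M : 'M[bool]_(m, n)).
Variables (f : 'I_m * 'I_n) (phi : 'I_k * 'I_l -> 'I_m * 'I_n).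
Hypothesis avoidPM : avoids P M.
Hypothesis embP : embedding P (switch M f) phi.

Lemma embedding_switch_hit : exists2 e, P e.1 e.2 & phi e = f.
Proof.
case: (boolP [exists e, P e.1 e.2 && (phi e == f)]).
  by case/existsP=> e /andP [Pe /eqP hit]; exists e.
move=> /existsPn no_hit; case: avoidPM; exists phi.
have [one_entries mono] := embP; split=> // e Pe.
by rewrite -(switch_neq M (f := f)) ?one_entries //; have := no_hit e; rewrite Pe.
Qed.

Variable e : 'I_k * 'I_l.
Hypothesis phi_e : phi e = f.

Lemma embedding_move_in_row (y : 'I_n) :
  M f.1 y ->
  (forall e' : 'I_k * 'I_l, e'.2 < e.2 -> (phi e').2 < y) ->
  (forall e' : 'I_k * 'I_l, e.2 < e'.2 -> y < (phi e').2) ->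
  embedding P M (fun e' => if e' == e then (f.1, y) else phi e').
Proof.
move=> My left_of_y right_of_y; have [one_entries [row_mono col_mono]] := embP.
split; [|split].
- move=> e' Pe'; case: eqP => // /eqP ne.
  rewrite -(switch_neq M (f := f)) ?one_entries // -phi_e.
  by apply: contra ne => /eqP /(embedding_inj embP) ->.
- move=> e1 e2 lt_e; case: eqP => [E1|_]; case: eqP => [E2|_] /=.
  + by rewrite E1 E2 ltnn in lt_e.
  + by rewrite -phi_e -E1; apply: row_mono.
  + by rewrite -phi_e -E2; apply: row_mono.
  + exact: row_mono.
- move=> e1 e2 lt_e; case: eqP => [E1|_]; case: eqP => [E2|_] /=.
  + by rewrite E1 E2 ltnn in lt_e.
  + by apply: right_of_y; rewrite -E1.
  + by apply: left_of_y; rewrite -E2.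
  + exact: col_mono.
Qed.

Lemma embedding_column_right_of (y : 'I_n) (i : 'I_k) :
  M f.1 y -> y < f.2 -> y < (phi (i, e.2)).2.
Proof.
move=> My lt_yf; rewrite ltnNge; apply/negP => le_cy; apply: avoidPM.
have [_ [_ col_mono]] := embP.
eexists; apply: (embedding_move_in_row My) => e' lt_e'.
- by have := col_mono e' (i, e.2) lt_e'; lia.
- by have := col_mono e e' lt_e'; rewrite phi_e; lia.
Qed.

Lemma embedding_column_left_of (y : 'I_n) (i : 'I_k) :
  M f.1 y -> f.2 < y -> (phi (i, e.2)).2 < y.
Proof.
move=> My lt_fy; rewrite ltnNge; apply/negP => le_yc; apply: avoidPM.
have [_ [_ col_mono]] := embP.
eexists; apply: (embedding_move_in_row My) => e' lt_e'.
- by have := col_mono e' e lt_e'; rewrite phi_e; lia.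
- by have := col_mono (i, e.2) e' lt_e'; lia.
Qed.

End SwitchedEmbedding.

Theorem lemma3p7 (k l m n : nat) (P : 'M[bool]_(k, l)) (M : 'M[bool]_(m, n))
    (z : {set 'I_m * 'I_n}) (f : 'I_m * 'I_n)
    (phi : 'I_k * 'I_l -> 'I_m * 'I_n) :
  avoids P M -> hzero_run M z -> f \in z -> embedding P (switch M f) phi ->
  exists e : 'I_k * 'I_l,
    P e.1 e.2 = true /\ phi e = f /\
    forall i : 'I_k, exists2 x, x \in z & (phi (i, e.2)).2 = x.2.
Proof.
move=> avoidPM [r [a [b [_ [memz [_ [left_end right_end]]]]]]] fz embP.
have [row_f /andP [le_af le_fb]] := iffLR (memz f) fz.
have [e Pe phi_e] := embedding_switch_hit avoidPM embP.
exists e; split=> //; split=> // i; set c := (phi (i, e.2)).2.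
exists (r, c) => //; apply/memz; split=> //=; apply/andP; split.
- case: left_end => [-> //|[y [y_a My]]].
  rewrite -row_f in My.
  by have := embedding_column_right_of avoidPM embP phi_e i My; rewrite -/c; lia.
- case: right_end => [n_b|[y [y_b My]]]; first by have := ltn_ord c; lia.
  rewrite -row_f in My.
  by have := embedding_column_left_of avoidPM embP phi_e i My; rewrite -/c; lia.
Qed.
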